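(* There are positive constants $c_1$ and $c_2$ such that the following holds. Let $n$ be even and let $N_n$ be the $n\times n$ random Bernoulli matrix. For any $L\ge n$, there is an $n\times n$ deterministic matrix $M$ such that $\|M\| = L$ and $$\mathbb{P}\Big(s_n(M+N_n)\le c_1\frac{n}{L}\Big)\ge c_2 n^{-1/2}.$$
   Context: The random Bernoulli matrix $N_n$ has independent entries, each taking the values $+1$ and $-1$ with probability $1/2$. $\|M\|$ denotes the operator norm (largest singular value) of $M$, and $s_n(X)$ denotes the smallest singular value of an $n\times n$ matrix $X$. *)

From HB Require Import structures.
From mathcomp Require Import all_boot all_order all_algebra.
From mathcomp Require Import classical_sets reals.
Set Implicit Arguments. Unset Strict Implicit. Unset Printing Implicit Defensive.
Import Order.TTheory GRing.Theory Num.Theory.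
Local Open Scope ring_scope.
Local Open Scope classical_set_scope.

Section Defs.
Variable R : realType.

Definition vnorm (n : nat) (x : 'cV[R]_n) : R := Num.sqrt (\sum_i (x i 0) ^+ 2).

Definition usphere (n : nat) : set 'cV[R]_n := [set x | vnorm x = 1].

Definition opnorm n (A : 'M[R]_n) : R :=
  sup [set vnorm (A *m x) | x in @usphere n].

Definition smin n (A : 'M[R]_n) : R :=
  inf [set vnorm (A *m x) | x in @usphere n].

Definition signmx n (B : 'M[bool]_n) : 'M[R]_n :=
  \matrix_(i, j) (if B i j then 1 else -1).

(* Probability, for the n x n Bernoulli matrix N_n (uniform on the 2^(n^2)
   sign matrices, i.e. independent fair +-1 entries), of the event E. *)
Definition bern_prob n (E : 'M[R]_n -> bool) : R :=
  #|[set B : 'M[bool]_n | E (signmx B)]|%:R / #|{: 'M[bool]_n}|%:R.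

End Defs.

From mathcomp Require Import all_boot all_order all_algebra.
From mathcomp Require Import classical_sets reals.
From mathcomp Require Import ring lra.
Set Implicit Arguments. Unset Strict Implicit. Unset Printing Implicit Defensive.
Import Order.TTheory GRing.Theory Num.Theory.
Local Open Scope ring_scope.
Local Open Scope classical_set_scope.

(* Take M = L (I - P), where P is the orthogonal projection onto e_0 - e_1,
   so that ||M|| = L.  With probability 1/4 the first two rows of N agree in
   their first two entries; then d := N (e_0 - e_1) vanishes in its first two
   coordinates, M acts on d as multiplication by L, and the vector
   x = e_0 - e_1 - d / L, of norm at least 1, satisfies (M + N) x = - N d / L.
   As d only involves the first two columns of N, flipping the signs of the
   other columns shows E |N d|^2 <= 4 n^2, so by Markov |N d| <= 8 n except on
   a 1/16 fraction of the matrices.  Hence s_n(M + N) <= 8 n / L with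
   probability at least 3/16, a constant, which exceeds c_2 n^(-1/2). *)

Section SignFlip.
Variable R : realFieldType.

Definition sgn (b : bool) : R := if b then 1 else -1.

Lemma sgnN b : sgn (~~ b) = - sgn b.
Proof. by case: b; rewrite /sgn ?opprK. Qed.

Lemma sgn_sqr b : sgn b ^+ 2 = 1.
Proof. by case: b; rewrite /sgn ?sqrrN expr1n. Qed.

Definition flip_entry n (i j : 'I_n) (B : 'M[bool]_n) : 'M[bool]_n :=
  \matrix_(k, l) (if (k == i) && (l == j) then ~~ B k l else B k l).

Lemma flip_entryK n (i j : 'I_n) : involutive (flip_entry i j).
Proof.
move=> B; apply/matrixP => k l; rewrite !mxE.
by case: ((k == i) && (l == j)); rewrite ?negbK.
Qed.

Lemma flip_entry_col n (i j : 'I_n) B k l : l != j -> flip_entry i j B k l = B k l.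
Proof. by move=> hl; rewrite mxE (negbTE hl) andbF. Qed.

Lemma flip_entry_row n (i j : 'I_n) B k l : k != i -> flip_entry i j B k l = B k l.
Proof. by move=> hk; rewrite mxE (negbTE hk). Qed.

(* The involution [flip_entry i j] turns each term into its opposite. *)
Lemma sum_sgn_flip_eq0 n (i j : 'I_n) (g : 'M[bool]_n -> R) :
  (forall B, g (flip_entry i j B) = g B) ->
  \sum_(B : 'M[bool]_n) sgn (B i j) * g B = 0.
Proof.
move=> g_flip; set S := \sum_B _.
suff : S = - S by lra.
rewrite {1}/S (reindex_inj (inv_inj (@flip_entryK n i j))) /= -sumrN.
by apply: eq_bigr => B _; rewrite g_flip mxE !eqxx sgnN mulNr.
Qed.

End SignFlip.

Arguments sgn {R}.

Section Norms.
Variable R : realType.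

Lemma vnorm_ge0 n (x : 'cV[R]_n) : 0 <= vnorm x.
Proof. exact: sqrtr_ge0. Qed.

Lemma vnormZ n (a : R) (x : 'cV[R]_n) : vnorm (a *: x) = `|a| * vnorm x.
Proof.
rewrite /vnorm -sqrtr_sqr -sqrtrM ?sqr_ge0 // mulr_sumr; congr Num.sqrt.
by apply: eq_bigr => i _; rewrite mxE exprMn.
Qed.

Lemma vnorm_ge_coord n (x : 'cV[R]_n) i : `|x i 0| <= vnorm x.
Proof.
rewrite /vnorm -sqrtr_sqr ler_sqrt ?sumr_ge0 // => [|j _]; last exact: sqr_ge0.
by rewrite (bigD1 i) //= lerDl sumr_ge0 // => j _; exact: sqr_ge0.
Qed.

Lemma vnorm_le_mul n m (x : 'cV[R]_n) (y : 'cV[R]_m) c : 0 <= c ->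
  \sum_i x i 0 ^+ 2 <= c ^+ 2 * \sum_i y i 0 ^+ 2 -> vnorm x <= c * vnorm y.
Proof.
move=> c0 h; rewrite /vnorm -(ger0_norm c0) -sqrtr_sqr -sqrtrM ?sqr_ge0 //.
by rewrite ler_sqrt // mulr_ge0 ?sqr_ge0 // sumr_ge0 // => i _; rewrite sqr_ge0.
Qed.

Lemma smin_le_vnorm n (X : 'M[R]_n) (x : 'cV[R]_n) :
  1 <= vnorm x -> smin X <= vnorm (X *m x).
Proof.
move=> x_ge1; have x_gt0 : 0 < vnorm x by apply: lt_le_trans x_ge1.
set u := (vnorm x)^-1 *: x.
have u_unit : usphere u.
  rewrite /usphere /= vnormZ ger0_norm; last by rewrite invr_ge0 ltW.
  by rewrite mulVf // gt_eqF.
have lb : has_lbound [set vnorm (X *m x) | x in @usphere R n].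
  by exists 0 => r [z _ <-]; exact: vnorm_ge0.
apply: le_trans (ge_inf lb (ex_intro2 _ _ u u_unit erefl)) _.
rewrite -scalemxAr vnormZ ger0_norm; last by rewrite invr_ge0 ltW.
by apply: ler_piMl; [exact: vnorm_ge0 | rewrite invf_le1].
Qed.

Lemma opnorm_attained n (X : 'M[R]_n) (L : R) (u : 'cV[R]_n) :
  (forall x, usphere x -> vnorm (X *m x) <= L) ->
  usphere u -> vnorm (X *m u) = L -> opnorm X = L.
Proof.
move=> ub u_unit Xu.
have L_mem : [set vnorm (X *m x) | x in @usphere R n] L by exists u.
apply/le_anti/andP; split.
  by apply: ge_sup; [exists L | move=> y [x hx <-]; exact: ub].
by apply: ub_le_sup => //; exists L => y [x hx <-]; exact: ub.
Qed.

End Norms.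

Section CollapseMatrix.
Variables (R : realType) (k : nat).
Local Notation n := k.+2.

Definition i1 : 'I_n := lift ord0 ord0.

Lemma sum_ord2 (f : 'I_n -> R) :
  \sum_i f i = f ord0 + f i1 + \sum_(i < k) f (lift ord0 (lift ord0 i)).
Proof. by rewrite !big_ord_recl addrA. Qed.

Lemma lt2_ord (i : 'I_n) : (i < 2)%N -> i = ord0 \/ i = i1.
Proof. by case: i => [[|[|m]]] hm //= _; [left | right]; exact: val_inj. Qed.

(* L times the orthogonal projection onto the complement of e_0 - e_1. *)
Definition collapse_mx (L : R) : 'M[R]_n :=
  \matrix_(i, j) (if ((i < 2) && (j < 2))%N then L / 2 else if i == j then L else 0).

Lemma collapse_mxE L (x : 'cV[R]_n) i :
  (collapse_mx L *m x) i 0 =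
  if (i < 2)%N then L / 2 * (x ord0 0 + x i1 0) else L * x i 0.
Proof.
rewrite mxE; case: ifP => hi.
  rewrite sum_ord2 !mxE hi /= big1 ?addr0; first ring.
  move=> j _; rewrite mxE /= andbF.
  have -> : (i == lift ord0 (lift ord0 j)) = false.
    by apply/negbTE; rewrite -val_eqE; apply: contraTneq hi => ->.
  by rewrite mul0r.
rewrite (bigD1 i) //= mxE hi eqxx /= big1 ?addr0 // => j hj.
by rewrite mxE hi /= eq_sym (negbTE hj) mul0r.
Qed.

Definition e01 : 'cV[R]_n := delta_mx ord0 0 - delta_mx i1 0.

Lemma collapse_mx_e01 L : collapse_mx L *m e01 = 0.
Proof.
apply/matrixP => i j; rewrite (ord1 j) collapse_mxE !mxE /=.
case: ifP => [_ | i_ge2]; first by rewrite subr0 sub0r addrN mulr0.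
rewrite -!val_eqE /=; case: i i_ge2 => [[|[|i]] ?] //= _.
by rewrite subrr mulr0.
Qed.

Lemma collapse_mx_tail L (x : 'cV[R]_n) :
  (forall i : 'I_n, (i < 2)%N -> x i 0 = 0) -> collapse_mx L *m x = L *: x.
Proof.
move=> x_tail; apply/matrixP => i j; rewrite (ord1 j) collapse_mxE mxE.
by case: ifP => // /x_tail ->; rewrite !x_tail // addr0 !mulr0.
Qed.

Lemma opnorm_collapse_mx L : 0 < L -> opnorm (collapse_mx L) = L.
Proof.
move=> L_gt0; set s : R := Num.sqrt (2^-1).
have s2 : s ^+ 2 = 2^-1 by rewrite sqr_sqrtr // invr_ge0.
set u : 'cV[R]_n := \col_i (if (i < 2)%N then s else 0).
have u_unit : usphere u.
  rewrite /usphere /= /vnorm sum_ord2 !mxE /= big1 ?addr0; last first.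
    by move=> i _; rewrite mxE /= expr0n.
  by rewrite s2 (_ : 2^-1 + 2^-1 = 1 :> R) ?sqrtr1 //; field.
apply: (opnorm_attained _ u_unit).
- move=> x x_unit; rewrite -[X in _ <= X]mulr1 -x_unit.
  apply: vnorm_le_mul; first exact: ltW.
  rewrite sum_ord2 [in X in _ <= X]sum_ord2 !collapse_mxE /=.
  under eq_bigr do rewrite collapse_mxE /= exprMn.
  rewrite -mulr_sumr -subr_ge0.
  set S := \sum_(i < k) _; set a := x ord0 0; set b := x i1 0.
  suff -> : L ^+ 2 * (a ^+ 2 + b ^+ 2 + S) -
      ((L / 2 * (a + b)) ^+ 2 + (L / 2 * (a + b)) ^+ 2 + L ^+ 2 * S) =
      L ^+ 2 * (a - b) ^+ 2 / 2.
    by apply: divr_ge0 => //; rewrite mulr_ge0 // sqr_ge0.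
  by field.
- have Mu : collapse_mx L *m u = L *: u.
    apply/matrixP => i j; rewrite (ord1 j) collapse_mxE !mxE /=.
    by case: ifP => hi; rewrite ?hi //; field.
  by rewrite Mu vnormZ u_unit mulr1 gtr0_norm.
Qed.

End CollapseMatrix.

Arguments i1 {k}.
Arguments collapse_mx {R k}.
Arguments e01 {R k}.

Section BernoulliProbability.
Variable R : realType.

Lemma bern_prob_ge n (E : 'M[R]_n -> bool) (G : pred 'M[bool]_n) (c : R) :
  (forall B, G B -> E (signmx R B)) ->
  c * \sum_(B : 'M[bool]_n) 1 <= \sum_(B : 'M[bool]_n) (G B)%:R ->
  c <= bern_prob E.
Proof.
move=> GE cG; have total_gt0 : (0 : R) < #|{: 'M[bool]_n}|%:R.
  by rewrite ltr0n; apply/card_gt0P; exists (const_mx false).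
rewrite /bern_prob ler_pdivlMr //; apply: le_trans (le_trans cG _).
  by rewrite sumr_const.
rewrite -sum1_card natr_sum [X in _ <= X]big_mkcond /=; apply: ler_sum => B _.
case GB: (G B); last by case: (_ \in _).
by rewrite mem_set //; exact: GE.
Qed.

End BernoulliProbability.

Section CollapseEvent.
Variables (R : realType) (k : nat).
Local Notation n := k.+2.

(* The part of N (e_0 - e_1) outside the first two coordinates. *)
Definition dvec (B : 'M[bool]_n) : 'cV[R]_n :=
  \col_j (if (j < 2)%N then 0 else sgn (B j ord0) - sgn (B j i1)).

Definition resid2 (B : 'M[bool]_n) : R :=
  \sum_i (signmx R B *m dvec B) i 0 ^+ 2.

Definition twin_rows (B : 'M[bool]_n) : bool :=
  (B ord0 ord0 == B ord0 i1) && (B i1 ord0 == B i1 i1).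

Lemma signmx_e01 B : twin_rows B -> signmx R B *m e01 = dvec B.
Proof.
move=> /andP[/eqP tw0 /eqP tw1]; apply/matrixP => i j; rewrite (ord1 j) !mxE.
rewrite sum_ord2 !mxE /= big1 => [|m _]; last by rewrite !mxE /= subrr mulr0.
rewrite subr0 sub0r mulr1 mulrN1 addr0.
case i_lt2: (i < 2)%N => //.
by case: (lt2_ord i_lt2) => ->; rewrite ?tw0 ?tw1 subrr.
Qed.

Lemma smin_collapse_le L B t : 0 < L -> twin_rows B -> 0 <= t ->
  resid2 B <= t ^+ 2 * L ^+ 2 -> smin (collapse_mx L + signmx R B) <= t.
Proof.
move=> L_gt0 twB t_ge0 resid_le; set x := e01 - L^-1 *: dvec B.
have x_ge1 : 1 <= vnorm x.
  by apply: le_trans (vnorm_ge_coord x ord0); rewrite !mxE /= mulr0 !subr0 normr1.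
have Mx : (collapse_mx L + signmx R B) *m x = - (L^-1 *: (signmx R B *m dvec B)).
  rewrite /x mulmxDl !(mulmxBr _ e01) collapse_mx_e01 signmx_e01 // -!scalemxAr.
  rewrite collapse_mx_tail => [|i i_lt2]; last by rewrite mxE i_lt2.
  by rewrite scalerA mulVf ?gt_eqF // scale1r sub0r addrA addNr add0r.
apply: le_trans (smin_le_vnorm _ x_ge1) _.
rewrite Mx -scaleN1r !vnormZ normrN1 mul1r ger0_norm; last by rewrite invr_ge0 ltW.
rewrite ler_pdivrMl // /vnorm -(ger0_norm (mulr_ge0 (ltW L_gt0) t_ge0)) -sqrtr_sqr.
by rewrite ler_sqrt ?sqr_ge0 // exprMn mulrC.
Qed.

Lemma dvec_sqr_le4 B j : dvec B j 0 ^+ 2 <= 4.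
Proof.
rewrite mxE; case: ifP => _; first by rewrite expr0n /=; lra.
by rewrite /sgn; case: (B j ord0); case: (B j i1); rewrite /=; lra.
Qed.

Lemma dvec_flip_entry (i j : 'I_n) B : (2 <= j)%N -> dvec (flip_entry i j B) = dvec B.
Proof.
move=> j_ge2; have [j0 j1] : (ord0 == j) = false /\ (i1 == j) = false.
  by split; apply/eqP => j_eq; rewrite -j_eq in j_ge2.
by apply/matrixP => l m; rewrite !mxE j0 j1 !andbF.
Qed.

(* Only the diagonal terms survive: off the diagonal, flipping the entry
   (i, j) with j >= 2 changes the sign of the summand. *)
Lemma sum_sgn_dvec_mul i j j' :
  \sum_(B : 'M[bool]_n) (sgn (B i j) * dvec B j 0) * (sgn (B i j') * dvec B j' 0)
  <= (j == j')%:R * (4 * \sum_(B : 'M[bool]_n) 1).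
Proof.
have [<- | j_neq] := eqVneq j j'.
  rewrite mul1r mulr_sumr; apply: ler_sum => B _.
  by rewrite mulr1 -expr2 exprMn sgn_sqr mul1r dvec_sqr_le4.
rewrite mul0r le_eqVlt; apply/orP; left; apply/eqP.
case: (ltnP j 2) => [j_lt2 | j_ge2].
  by rewrite big1 // => B _; rewrite mxE j_lt2 mulr0 mul0r.
under eq_bigr do rewrite -mulrA.
apply: sum_sgn_flip_eq0 => B.
by rewrite dvec_flip_entry // flip_entry_col // eq_sym.
Qed.

Lemma sum_resid2_le : \sum_B resid2 B <= 4 * n%:R ^+ 2 * \sum_(B : 'M[bool]_n) 1.
Proof.
set S := \sum_(B : 'M[bool]_n) (1 : R).
pose f (B : 'M[bool]_n) i j := sgn (B i j) * dvec B j 0.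
have resid2E B : resid2 B = \sum_i \sum_j \sum_j' f B i j * f B i j'.
  apply: eq_bigr => i _; rewrite mxE expr2 mulr_suml; apply: eq_bigr => j _.
  by rewrite mulr_sumr; apply: eq_bigr => j' _; rewrite /f !mxE.
have diag (j : 'I_n) : \sum_(j' < n) (j == j')%:R * (4 * S) = 4 * S.
  rewrite (bigD1 j) //= eqxx mul1r big1 ?addr0 // => j' /negbTE.
  by rewrite eq_sym => ->; rewrite mul0r.
rewrite (eq_bigr _ (fun B _ => resid2E B)) exchange_big /=.
apply: le_trans (_ : \sum_(i < n) \sum_(j < n) \sum_(j' < n)
    (j == j')%:R * (4 * S) <= _).
  apply: ler_sum => i _; rewrite exchange_big; apply: ler_sum => j _.
  by rewrite exchange_big; apply: ler_sum => j' _; exact: sum_sgn_dvec_mul.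
under eq_bigr do rewrite (eq_bigr _ (fun j _ => diag j)).
by rewrite !sumr_const card_ord -mulrnA -[X in X <= _]mulr_natr natrM -expr2 mulrAC.
Qed.

Lemma sum_twin_rows :
  \sum_(B : 'M[bool]_n) (twin_rows B)%:R = 4^-1 * \sum_(B : 'M[bool]_n) (1 : R).
Proof.
pose s (B : 'M[bool]_n) i j : R := sgn (B i j).
have twinE B : (twin_rows B)%:R = 4^-1 * (1 + s B ord0 ord0 * s B ord0 i1
    + s B i1 ord0 * s B i1 i1
    + s B ord0 ord0 * (s B ord0 i1 * s B i1 ord0 * s B i1 i1)).
  rewrite /twin_rows /s /sgn.
  by case: (B ord0 ord0); case: (B ord0 i1); case: (B i1 ord0); case: (B i1 i1);
    rewrite /= ?mulr1n ?mulr0n; lra.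
have flip00 (g : 'M[bool]_n -> R) : (forall B, g (flip_entry ord0 ord0 B) = g B) ->
    \sum_B s B ord0 ord0 * g B = 0 by exact: sum_sgn_flip_eq0.
rewrite (eq_bigr _ (fun B _ => twinE B)) -mulr_sumr !big_split /= flip00; last first.
  by move=> B; rewrite /s !flip_entry_col.
rewrite (@sum_sgn_flip_eq0 _ _ i1 ord0 (fun B => s B i1 i1)); last first.
  by move=> B; rewrite /s flip_entry_col.
rewrite flip00 ?addr0 // => B.
by rewrite /s [flip_entry _ _ _ i1 ord0]flip_entry_row // !flip_entry_col.
Qed.

Definition small_resid (B : 'M[bool]_n) : bool :=
  twin_rows B && (resid2 B <= 64 * n%:R ^+ 2)%R.

(* Markov's inequality for [resid2] removes at most 1/16 of all matrices. *)
Lemma sum_small_resid_ge :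
  3 / 16 * \sum_(B : 'M[bool]_n) (1 : R) <= \sum_(B : 'M[bool]_n) (small_resid B)%:R.
Proof.
set S := \sum_(B : 'M[bool]_n) (1 : R); set c : R := 64 * n%:R ^+ 2.
have c_gt0 : 0 < c by rewrite mulr_gt0 // exprn_gt0 // ltr0n.
pose bad : R := \sum_(B : 'M[bool]_n) ((c < resid2 B)%R)%:R.
have bad_le : bad <= S / 16.
  rewrite -(ler_pM2l c_gt0); apply: le_trans (_ : 4 * n%:R ^+ 2 * S <= _); last first.
    by rewrite [c * _](_ : _ = 4 * n%:R ^+ 2 * S) // /c; field.
  apply: le_trans sum_resid2_le; rewrite mulr_sumr; apply: ler_sum => B _.
  case: ltP => [/ltW | _] /=; rewrite ?mulr1 ?mulr0 //.
  by rewrite sumr_ge0 // => i _; exact: sqr_ge0.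
have small_resid_ind B : (twin_rows B)%:R - ((c < resid2 B)%R)%:R <= (small_resid B)%:R :> R.
  by rewrite /small_resid; case: (twin_rows B); case: leP => _ /=;
    rewrite ?mulr1n ?mulr0n; lra.
apply: le_trans (ler_sum _ (fun B _ => small_resid_ind B)).
by rewrite sumrB sum_twin_rows -/S -/bad; lra.
Qed.

Lemma bern_prob_collapse L : 0 < L ->
  3 / 16 <= bern_prob (fun A : 'M[R]_n => smin (collapse_mx L + A) <= 8 * n%:R / L).
Proof.
move=> L_gt0; apply: (bern_prob_ge _ sum_small_resid_ge) => B /andP[twB resid_le].
apply: smin_collapse_le => //; first by rewrite divr_ge0 ?mulr_ge0 ?ler0n // ltW.
rewrite (_ : (8 * n%:R / L) ^+ 2 * L ^+ 2 = 64 * n%:R ^+ 2) //.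
by field; rewrite gt_eqF.
Qed.

End CollapseEvent.

Theorem theorem3p1 (R : realType) :
  exists c1 c2 : R, 0 < c1 /\ 0 < c2 /\
  forall n : nat, (0 < n)%N -> ~~ odd n ->
  forall L : R, n%:R <= L ->
  exists M : 'M[R]_n,
    opnorm M = L /\
    bern_prob (fun A : 'M[R]_n => smin (M + A) <= c1 * n%:R / L)
      >= c2 / Num.sqrt (n%:R).
Proof.
exists 8, (3 / 16); split; first lra; split; first lra.
case=> [|[|k]] // _ _ L n_le_L.
have L_gt0 : 0 < L by apply: lt_le_trans n_le_L; rewrite ltr0n.
exists (collapse_mx L); split; first exact: opnorm_collapse_mx.
have sqrt_n_ge1 : 1 <= Num.sqrt (k.+2)%:R :> R.
  by rewrite -[X in X <= _]sqrtr1 ler_sqrt ?ler0n // ler1n.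
apply: le_trans (bern_prob_collapse k L_gt0).
by rewrite ler_pdivrMr ?ler_peMr //; [lra | apply: lt_le_trans sqrt_n_ge1].
Qed.
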